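(* Consider the minimax Markov control model on Borel spaces described in the context, let $\rho,h:{\cal X}\to[0,\infty)$ be bounded, continuous, measurable functions whose suprema and infima over ${\cal X}$ are attained, and let $\varphi\in\mathbb{F}$ be a selector. Then $(\rho,h,\varphi)$ is a canonical triplet if and only if for every $x\in{\cal X}$: (a) $\displaystyle\rho(x)=\inf_{u\in{\cal U}(x)}\sup_{Q(\cdot|x,u)\in\mathbf{B}_R(Q^o)(x,u)}\int_{\cal X}\rho(z)\,Q(dz|x,u)$; (b) $\displaystyle\rho(x)+h(x)=\inf_{u\in{\cal U}(x)}\sup_{Q(\cdot|x,u)\in\mathbf{B}_R(Q^o)(x,u)}\Big\{f(x,u)+\int_{\cal X}h(z)\,Q(dz|x,u)\Big\}$; (c) $\varphi(x)$ attains the infimum in both (a) and (b), i.e. $\displaystyle\rho(x)=\sup_{Q(\cdot|x,\varphi(x))\in\mathbf{B}_R(Q^o)(x,\varphi(x))}\int_{\cal X}\rho(z)Q(dz|x,\varphi(x))$ and $\displaystyle\rho(x)+h(x)=\sup_{Q(\cdot|x,\varphi(x))\in\mathbf{B}_R(Q^o)(x,\varphi(x))}\Big\{f(x,\varphi(x))+\int_{\cal X}h(z)Q(dz|x,\varphi(x))\Big\}$.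
   Context: Model: ${\cal X},{\cal U}$ are Polish spaces with Borel $\sigma$-algebras; for each $x$, ${\cal U}(x)\subseteq{\cal U}$ is a nonempty compact measurable set of feasible controls; $\mathbb{K}=\{(x,u):x\in{\cal X},u\in{\cal U}(x)\}$; $\mathbb{F}$ is the (assumed nonempty) set of measurable maps $\varphi:{\cal X}\to{\cal U}$ with $\varphi(x)\in{\cal U}(x)$ for all $x$ (selectors). $f:\mathbb{K}\to[0,\infty)$ is bounded and continuous; $Q^o(\cdot|x,u)$ is a stochastic kernel on ${\cal X}$ given $(x,u)\in\mathbb{K}$ with $Q^o(A|\cdot,\cdot)$ continuous on $\mathbb{K}$ for every Borel $A$. For probability measures, $\|\alpha-\beta\|_{TV}=\sup_P\sum_{F\in P}|\alpha(F)-\beta(F)|$, supremum over finite measurable partitions $P$ of ${\cal X}$. $R\in[0,2]$ and $\mathbf{B}_R(Q^o)(x,u)=\{Q(\cdot|x,u)\text{ probability on }{\cal X}:\|Q(\cdot|x,u)-Q^o(\cdot|x,u)\|_{TV}\le R\}$. Minimax $n$-stage costs with terminal cost $h$: $J_0^*(x,h)=h(x)$ and $J^*_{n+1}(x,h)=\inf_{u\in{\cal U}(x)}\sup_{Q(\cdot|x,u)\in\mathbf{B}_R(Q^o)(x,u)}\{f(x,u)+\int J^*_n(z,h)Q(dz|x,u)\}$; for the stationary policy $g^\infty$ that uses $\varphi$ at every stage, $J_0(g^\infty,x,h)=h(x)$ and $J_{n+1}(g^\infty,x,h)=\sup_{Q(\cdot|x,\varphi(x))\in\mathbf{B}_R(Q^o)(x,\varphi(x))}\{f(x,\varphi(x))+\int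 J_n(g^\infty,z,h)Q(dz|x,\varphi(x))\}$. Canonical triplet: $(\rho,h,\varphi)$, with $\rho,h$ real-valued bounded continuous nonnegative measurable functions on ${\cal X}$ and $\varphi\in\mathbb{F}$, is canonical if $J_n(g^\infty,x,h)=J^*_n(x,h)=n\rho(x)+h(x)$ for all $x\in{\cal X}$ and all $n=0,1,2,\dots$. *)

From HB Require Import structures.
From mathcomp Require Import all_boot all_order all_algebra.
From mathcomp Require Import all_classical all_reals all_analysis.
Set Implicit Arguments. Unset Strict Implicit. Unset Printing Implicit Defensive.
Import Order.TTheory GRing.Theory Num.Theory.
Import numFieldNormedType.Exports.
Local Open Scope classical_set_scope.
Local Open Scope ring_scope.

(* A Polish space: a (pointed) complete metric space which is Hausdorff
   (so the pseudometric is a metric) and separable. *)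
Definition polish (R : realType) (T : completePseudoMetricType R) : Prop :=
  hausdorff_space T /\ exists D : set T, countable D /\ dense D.

Definition borel (T : ptopologicalType) := g_sigma_algebraType (@open T).

Definition finite_mpartition d (T : measurableType d) (n : nat)
    (P : 'I_n -> set T) : Prop :=
  (forall i, measurable (P i)) /\ trivIset setT P /\ \bigcup_i P i = setT.

Definition tv_dist d (T : measurableType d) (R : realType)
    (alpha beta : set T -> \bar R) : \bar R :=
  ereal_sup [set e | exists (n : nat) (P : 'I_n -> set T),
     finite_mpartition P /\ e = (\sum_(i < n) `|alpha (P i) - beta (P i)|)%E].

Section Model.
Context (R : realType) (X U : ptopologicalType).

Definition tv_ball (Rad : R) (Qo : X -> U -> probability (borel X) R)
    (x : X) (u : U) : set (probability (borel X) R) :=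
  [set Q | (tv_dist Q (Qo x u) <= Rad%:E)%E].

Definition sup_step (Rad : R) (Qo : X -> U -> probability (borel X) R)
    (c : R) (v : X -> \bar R) (x : X) (u : U) : \bar R :=
  ereal_sup [set (c%:E + \int[Q]_(z in [set: borel X]) v z)%E
            | Q in tv_ball Rad Qo x u].

Fixpoint Jstar (Rad : R) (Ux : X -> set U) (f : X -> U -> R)
    (Qo : X -> U -> probability (borel X) R) (h : X -> R) (n : nat)
    : X -> \bar R :=
  match n with
  | 0 => fun x => (h x)%:E
  | n'.+1 => fun x =>
      ereal_inf [set sup_step Rad Qo (f x u) (Jstar Rad Ux f Qo h n') x u
                | u in Ux x]
  end.

Fixpoint Jpol (Rad : R) (f : X -> U -> R)
    (Qo : X -> U -> probability (borel X) R) (phi : X -> U) (h : X -> R)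
    (n : nat) : X -> \bar R :=
  match n with
  | 0 => fun x => (h x)%:E
  | n'.+1 => fun x =>
      sup_step Rad Qo (f x (phi x)) (Jpol Rad f Qo phi h n') x (phi x)
  end.

Definition selector (Ux : X -> set U) (phi : X -> U) : Prop :=
  measurable_fun [set: borel X] (phi : borel X -> borel U) /\
  forall x, Ux x (phi x).

Definition bounded_fun_X (g : X -> R) : Prop := exists M : R, forall x, `|g x| <= M.

Definition canonical_triplet (Rad : R) (Ux : X -> set U) (f : X -> U -> R)
    (Qo : X -> U -> probability (borel X) R)
    (rho h : X -> R) (phi : X -> U) : Prop :=
  ([/\ bounded_fun_X rho /\ bounded_fun_X h,
      continuous rho /\ continuous h,
      ((forall x, 0 <= rho x) /\ (forall x, 0 <= h x)) /\

      measurable_fun [set: borel X] (rho : borel X -> R) /\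
      measurable_fun [set: borel X] (h : borel X -> R),
      selector Ux phi &
      forall n x, Jpol Rad f Qo phi h n x = Jstar Rad Ux f Qo h n x /\
                  Jstar Rad Ux f Qo h n x = (n%:R * rho x + h x)%:E]).

End Model.

From HB Require Import structures.
From mathcomp Require Import all_boot all_order all_algebra.
From mathcomp Require Import all_classical all_reals all_analysis.
From mathcomp Require Import lra measurable_realfun.
Set Implicit Arguments. Unset Strict Implicit. Unset Printing Implicit Defensive.
Import Order.TTheory GRing.Theory Num.Theory.
Import numFieldNormedType.Exports.
Local Open Scope classical_set_scope.
Local Open Scope ring_scope.

(* Write V_n := n rho + h and T_n(x,u) := sup_{Q in B_R(Q^o)(x,u)} {f(x,u) + \int V_n dQ}.
   If (rho, h, phi) is canonical, then inf_u T_n(x,u) = T_n(x, phi x) = V_(n+1)(x), while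
   T_n(x,u) lies within a bounded distance of n sup_Q \int rho dQ; dividing by n gives (a)
   and the first half of (c), and n = 1 gives the rest.  Conversely, (a)-(c) propagate
   J*_n = J_n = V_n through the recursion as soon as rho(x) <= \int rho dQ for every Q in
   every ball.  For R = 0 the ball is {Q^o(x,u)} and this is (a).  For R > 0, at a minimiser
   x_m of rho one may move mass R/2 of Q^o(x_m, phi x_m) onto a maximiser x_M without
   leaving the ball, and (c) then forces rho(x_M) <= rho(x_m): rho is constant. *)

Lemma le0_of_natmul_bounded (R : realType) (d C : R) :
  (forall n : nat, n%:R * d <= C) -> d <= 0.
Proof.
move=> H; rewrite leNgt; apply/negP => d0.
have hb : 0 <= `|C| / d by rewrite divr_ge0 // ltW.
have := archi_boundP hb; set m := Num.Def.archi_bound _ => hm.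
have := H m; rewrite (ltr_pdivrMr _ _ d0) in hm.
have := ler_norm C; lra.
Qed.

Lemma EFin_of_between (R : realType) (y : \bar R) (m M : R) :
  (m%:E <= y <= M%:E)%E -> exists2 r, y = r%:E & m <= r <= M.
Proof. by case: y => [r| |] //=; rewrite ?lee_fin ?leey ?andbF // => ?; exists r. Qed.

Lemma ereal_inf_attained (R : realType) (T : Type) (S : set T) (F : T -> \bar R)
    (a : \bar R) (u0 : T) :
  S u0 -> F u0 = a -> (forall u, S u -> (a <= F u)%E) ->
  ereal_inf [set F u | u in S] = a.
Proof.
move=> Su0 Fu0 aF; apply/eqP; rewrite eq_le; apply/andP; split.
  by rewrite -Fu0; apply: ereal_inf_lbound; exists u0.
by apply/ereal_infP => _ [u Su <-]; exact: aF.
Qed.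

Section probability_integral.
Context d (T : measurableType d) (R : realType) (P : probability T R).
Local Open Scope ereal_scope.

Lemma integral_prob_cst (c : R) : \int[P]_(z in [set: T]) c%:E = c%:E.
Proof. by rewrite integral_cst //= probability_setT mule1. Qed.

Lemma integral_prob_ge (g : T -> R) (m : R) : (0 <= m)%R ->
  (forall z, m <= g z)%R -> measurable_fun [set: T] g ->
  m%:E <= \int[P]_(z in [set: T]) (g z)%:E.
Proof.
move=> m0 m_le mg; rewrite -integral_prob_cst; apply: ge0_le_integral => //.
- exact/measurable_EFinP.
- by move=> z _; rewrite lee_fin.
Qed.

Lemma integral_prob_bounded (g : T -> R) (M : R) :
  (forall z, 0 <= g z <= M)%R -> measurable_fun [set: T] g ->
  exists2 i, \int[P]_(z in [set: T]) (g z)%:E = i%:E & (0 <= i <= M)%R.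
Proof.
move=> gM mg; apply: EFin_of_between; apply/andP; split.
  by apply: integral_ge0 => z _; rewrite lee_fin; case/andP: (gM z).
rewrite -integral_prob_cst; apply: ge0_le_integral => //.
- by move=> z _; rewrite lee_fin; case/andP: (gM z).
- exact/measurable_EFinP.
- by move=> z _; rewrite lee_fin; case/andP: (gM z) => _ ->.
Qed.

Lemma integral_prob_affine (g k : T -> R) (a : R) :
  (0 <= a)%R -> (forall z, 0 <= g z)%R -> (forall z, 0 <= k z)%R ->
  measurable_fun [set: T] g -> measurable_fun [set: T] k ->
  \int[P]_(z in [set: T]) ((a * g z + k z)%R)%:E =
  a%:E * \int[P]_(z in [set: T]) (g z)%:E + \int[P]_(z in [set: T]) (k z)%:E.
Proof.
move=> a0 g0 k0 mg mk.
under eq_integral do rewrite EFinD EFinM.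
rewrite ge0_integralD//.
- rewrite ge0_integralZl_EFin//.
  + by move=> z _; rewrite lee_fin.
  + exact/measurable_EFinP.
- by move=> z _; rewrite mule_ge0// lee_fin.
- by apply/measurable_EFinP; apply: measurable_funM.
- by move=> z _; rewrite lee_fin.
- exact/measurable_EFinP.
Qed.

End probability_integral.

Section dirac_mixture.
Context d (T : measurableType d) (R : realType) (P : probability T R) (a : T)
  (b : {nonneg R}) (b1 : (b%:num <= 1)%R).
Local Open Scope ereal_scope.

Let onemb_ge0 : (0 <= 1 - b%:num)%R. Proof. by rewrite subr_ge0. Qed.
Let onemb : {nonneg R} := NngNum onemb_ge0.

Definition dirac_mix : set T -> \bar R :=
  measure_add (mscale onemb P) (mscale b \d_a).

HB.instance Definition _ := Measure.on dirac_mix.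

Lemma dirac_mixE A : dirac_mix A = (1 - b%:num)%:E * P A + b%:num%:E * \d_a A.
Proof. by rewrite /dirac_mix measure_addE. Qed.

Let dirac_mix_setT : dirac_mix setT = 1.
Proof. by rewrite dirac_mixE probability_setT diracT !mule1 -EFinD subrK. Qed.

HB.instance Definition _ := Measure_isProbability.Build _ _ R dirac_mix dirac_mix_setT.

Lemma integral_dirac_mix (g : T -> \bar R) : (forall z, 0 <= g z) ->
  measurable_fun setT g ->
  \int[dirac_mix]_(z in setT) g z =
  (1 - b%:num)%:E * \int[P]_(z in setT) g z + b%:num%:E * g a.
Proof.
move=> g0 mg.
rewrite ge0_integral_measure_add // ?ge0_integral_mscale //.
by rewrite integral_dirac // diracT mul1e.
Qed.

End dirac_mixture.

Section total_variation.
Context d (T : measurableType d) (R : realType).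
Local Open Scope ereal_scope.

Lemma sum_mpartition_le1 (P : probability T R) n (F : 'I_n -> set T) :
  finite_mpartition F -> \sum_(i < n) P (F i) <= 1.
Proof.
move=> [mF [tF _]]; rewrite -(measure_bigsetU_ord P xpredT mF tF).
by apply: probability_le1; exact: bigsetU_measurable.
Qed.

Lemma fine_probability_01 (P : probability T R) A : measurable A ->
  (0 <= fine (P A) <= 1)%R.
Proof.
by move=> mA; rewrite -!lee_fin fineK ?fin_num_measure // measure_ge0 probability_le1.
Qed.

Lemma tv_dist_self (P : probability T R) : tv_dist P P <= 0.
Proof.
apply: ge_ereal_sup => _ [n [F [[mF _] ->]]].
by rewrite big1 // => i _; rewrite subee ?abse0 // fin_num_measure.
Qed.

Lemma tv_dist_dirac_mix (P : probability T R) (a : T) (b : {nonneg R})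
    (b1 : (b%:num <= 1)%R) :
  tv_dist (dirac_mix P a b1) P <= (2 * b%:num)%:E.
Proof.
apply: ge_ereal_sup => _ [n [F [FP ->]]].
have [mF _] := FP.
have term_le i : `|dirac_mix P a b1 (F i) - P (F i)| <=
                 b%:num%:E * (\d_a (F i) + P (F i)).
  rewrite dirac_mixE -[P _]fineK ?fin_num_measure //.
  rewrite -[\d_a _]fineK ?fin_num_measure //.
  have /andP[q0 q1] := fine_probability_01 P (mF i).
  have /andP[e0 e1] := fine_probability_01 \d_a (mF i).
  rewrite -!EFinM -!EFinD /abse lee_fin ler_norml.
  have b0 : (0 <= b%:num)%R by [].
  have bq := mulr_ge0 b0 q0; have be := mulr_ge0 b0 e0.
  set q := fine (P (F i)) in q0 q1 bq *; set e := fine (\d_a (F i)) in e0 e1 be *.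
  by apply/andP; split; nra.
apply: (@le_trans _ _ (\sum_(i < n) b%:num%:E * (\d_a (F i) + P (F i)))).
  by apply: lee_sum => i _; exact: term_le.
rewrite -ge0_sume_distrr; last by move=> i _; rewrite adde_ge0.
rewrite big_split /= EFinM [X in _ <= X]muleC.
apply: lee_wpmul2l; first by rewrite lee_fin.
have -> : 2%:E = (1 + 1 : \bar R) by rewrite -EFinD.
by apply: leeD; apply: sum_mpartition_le1.
Qed.

Lemma tv_dist_le0_eq (Q P : probability T R) : tv_dist Q P <= 0 ->
  forall A, measurable A -> Q A = P A.
Proof.
move=> QP A mA.
pose F := fun i : 'I_2 => if i == ord0 then A else ~` A.
have FP : finite_mpartition F.
  split; first by move=> i; rewrite /F; case: ifP => _ //; exact: measurableC.
  split.
    move=> i j _ _ [z [Fi Fj]].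
    apply/val_inj; move: i j Fi Fj; rewrite /F => -[[|[|//]] ?] [[|[|//]] ?] //=.
  by apply/seteqP; split => // z _; case: (pselect (A z)) => Az;
    [exists ord0 | exists (lift ord0 ord0)] => //; rewrite /F /=.
have : \sum_(i < 2) `|Q (F i) - P (F i)| <= 0.
  by apply: le_trans QP; apply: ereal_sup_ubound; exists 2%N, F.
rewrite big_ord_recl /= => sum_le0.
have : `|Q A - P A| <= 0.
  apply: le_trans sum_le0; rewrite /F /=; apply: leeDl.
  by apply: sume_ge0 => i _; exact: abse_ge0.
rewrite -[Q A]fineK ?fin_num_measure // -[P A]fineK ?fin_num_measure //.
by rewrite -EFinB /abse lee_fin normr_le0 subr_eq0 => /eqP ->.
Qed.

End total_variation.

Section one_step_operator.
Context (R : realType) (X U : ptopologicalType) (Rad : R)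
  (Qo : X -> U -> probability (borel X) R).
Hypothesis Rad_ge0 : (0 <= Rad)%R.
Local Open Scope ereal_scope.

Lemma tv_ball_center x u : tv_ball Rad Qo x u (Qo x u).
Proof. by rewrite /tv_ball /=; apply: le_trans (tv_dist_self _) _; rewrite lee_fin. Qed.

Lemma sup_step_ubound x u c g Q : tv_ball Rad Qo x u Q ->
  c%:E + \int[Q]_(z in [set: borel X]) g z <= sup_step Rad Qo c g x u.
Proof. by move=> HQ; apply: ereal_sup_ubound; exists Q. Qed.

Lemma ge_sup_step x u c g M :
  (forall Q, tv_ball Rad Qo x u Q -> c%:E + \int[Q]_(z in [set: borel X]) g z <= M) ->
  sup_step Rad Qo c g x u <= M.
Proof. by move=> H; apply: ge_ereal_sup => _ [Q HQ <-]; exact: H. Qed.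

Lemma integral_tv_ball0 x u Q (g : X -> \bar R) : Rad = 0%R ->
  tv_ball Rad Qo x u Q ->
  \int[Q]_(z in [set: borel X]) g z = \int[Qo x u]_(z in [set: borel X]) g z.
Proof.
move=> R0 HQ; apply: eq_measure_integral => A mA _; apply: tv_dist_le0_eq => //.
by rewrite /tv_ball /= R0 in HQ.
Qed.

Lemma sup_step_bounded (g : X -> R) (M : R) c x u :
  (forall z, (0 <= g z <= M)%R) -> measurable_fun [set: borel X] (g : borel X -> R) ->
  exists2 s,
  sup_step Rad Qo c (fun z => (g z)%:E) x u = s%:E & (c <= s <= c + M)%R.
Proof.
move=> g01 mg; apply: EFin_of_between; apply/andP; split.
- apply: le_trans (sup_step_ubound c _ (tv_ball_center x u)).
  have [i -> /andP[i0 _]] := integral_prob_bounded (Qo x u) g01 mg.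
  by rewrite -EFinD lee_fin lerDl.
- apply: ge_sup_step => Q _.
  have [i -> /andP[_ iM]] := integral_prob_bounded Q g01 mg.
  by rewrite -EFinD lee_fin lerD2l.
Qed.

Section bounded_integrands.
Variables (g k : X -> R) (Mg Mk : R).
Hypotheses (g01 : forall z, (0 <= g z <= Mg)%R) (k01 : forall z, (0 <= k z <= Mk)%R).
Hypotheses (mg : measurable_fun [set: borel X] (g : borel X -> R))
  (mk : measurable_fun [set: borel X] (k : borel X -> R)).

Let g0 z : (0 <= g z)%R. Proof. by case/andP: (g01 z). Qed.
Let k0 z : (0 <= k z)%R. Proof. by case/andP: (k01 z). Qed.

Lemma sup_step_affine_le (a c : R) x u : (0 <= a)%R ->
  sup_step Rad Qo c (fun z => (a * g z + k z)%:E) x u <=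
  a%:E * sup_step Rad Qo 0 (fun z => (g z)%:E) x u +
  sup_step Rad Qo c (fun z => (k z)%:E) x u.
Proof.
move=> a0; apply: ge_sup_step => Q HQ.
rewrite integral_prob_affine // addeCA.
apply: leeD; last exact: sup_step_ubound.
apply: lee_wpmul2l; first by rewrite lee_fin.
by rewrite -[X in X <= _]add0e; exact: sup_step_ubound.
Qed.

Lemma sup_step_affine_ge_scale (a c : R) x u : (0 <= a)%R -> (0 <= c)%R ->
  a%:E * sup_step Rad Qo 0 (fun z => (g z)%:E) x u <=
  sup_step Rad Qo c (fun z => (a * g z + k z)%:E) x u.
Proof.
move=> a0 c0; rewrite /sup_step -ereal_supZl //; last first.
  by apply/set0P; exists (0%:E + \int[Qo x u]_(z in [set: borel X]) (g z)%:E), (Qo x u);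
    [exact: tv_ball_center|].
apply: ge_ereal_sup => _ [_ [Q HQ <-] <-].
apply: le_trans (sup_step_ubound c _ HQ).
rewrite add0e integral_prob_affine //.
have [i -> _] := integral_prob_bounded Q g01 mg.
have [j -> /andP[j0 _]] := integral_prob_bounded Q k01 mk.
by rewrite -EFinM -!EFinD lee_fin; lra.
Qed.

Lemma sup_step_affine_ge_shift (a c m : R) x u : (0 <= a)%R ->
  (forall Q, tv_ball Rad Qo x u Q -> m%:E <= \int[Q]_(z in [set: borel X]) (g z)%:E) ->
  (a * m)%:E + sup_step Rad Qo c (fun z => (k z)%:E) x u <=
  sup_step Rad Qo c (fun z => (a * g z + k z)%:E) x u.
Proof.
move=> a0 mQ; rewrite -leeBrDl //; apply: ge_sup_step => Q HQ; rewrite leeBrDl //.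
apply: le_trans (sup_step_ubound c _ HQ).
have := mQ Q HQ; rewrite integral_prob_affine //.
have [i -> _] := integral_prob_bounded Q g01 mg.
have [j -> _] := integral_prob_bounded Q k01 mk.
rewrite lee_fin -EFinM -!EFinD lee_fin => mi.
by have := ler_wpM2l a0 mi; lra.
Qed.

End bounded_integrands.
End one_step_operator.

Section minimax_model.
Context (R : realType) (X U : ptopologicalType) (Rad : R)
  (Ux : X -> set U) (f : X -> U -> R) (Qo : X -> U -> probability (borel X) R)
  (rho h : X -> R) (phi : X -> U) (Mf Mr Mh : R).
Hypotheses (Rad_ge0 : (0 <= Rad)%R) (phi_in : forall x, Ux x (phi x)).
Hypothesis f01 : forall x u, Ux x u -> (0 <= f x u <= Mf)%R.
Hypotheses (rho01 : forall z, (0 <= rho z <= Mr)%R) (h01 : forall z, (0 <= h z <= Mh)%R).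
Hypotheses (rho_meas : measurable_fun [set: borel X] (rho : borel X -> R))
  (h_meas : measurable_fun [set: borel X] (h : borel X -> R)).
Local Open Scope ereal_scope.

Local Notation avg x u := (sup_step Rad Qo 0 (fun z => (rho z)%:E) x u).
Local Notation V n := (fun z => ((n%:R * rho z + h z)%R)%:E).
Local Notation T n x u := (sup_step Rad Qo (f x u) (V n) x u).

Definition optimality_equations := forall x : X,
  [/\ (rho x)%:E = ereal_inf [set avg x u | u in Ux x],
      (rho x + h x)%:E =
        ereal_inf [set sup_step Rad Qo (f x u) (fun z => (h z)%:E) x u | u in Ux x],
      (rho x)%:E = avg x (phi x) &
      (rho x + h x)%:E = sup_step Rad Qo (f x (phi x)) (fun z => (h z)%:E) x (phi x)].

Let rho0 z : (0 <= rho z)%R. Proof. by case/andP: (rho01 z). Qed.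

Lemma Jstar_succ_affine n x : (forall z, Jstar Rad Ux f Qo h n z = V n z) ->
  Jstar Rad Ux f Qo h n.+1 x = ereal_inf [set T n x u | u in Ux x].
Proof. by move=> /funext /= ->. Qed.

Lemma Jpol_succ_affine n x : (forall z, Jpol Rad f Qo phi h n z = V n z) ->
  Jpol Rad f Qo phi h n.+1 x = T n x (phi x).
Proof. by move=> /funext /= ->. Qed.

Section canonical_triplet_optimality.
Hypothesis Jstar_affine : forall n z, Jstar Rad Ux f Qo h n z = V n z.
Hypothesis Jpol_affine : forall n z, Jpol Rad f Qo phi h n z = V n z.

Lemma canonical_rho_le_avg x u : Ux x u -> (rho x)%:E <= avg x u.
Proof.
move=> Uu; have [a Ea _] := sup_step_bounded Qo Rad_ge0 0 x u rho01 rho_meas.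
have [s Es /andP[_ sM]] := sup_step_bounded Qo Rad_ge0 (f x u) x u h01 h_meas.
rewrite Ea lee_fin -subr_le0.
apply: (@le0_of_natmul_bounded _ _ (Mf + Mh - rho x - h x)) => n.
have lb : V n.+1 x <= T n x u.
  by rewrite -Jstar_affine Jstar_succ_affine //; apply: ereal_inf_lbound; exists u.
have := le_trans lb (sup_step_affine_le Rad Qo rho01 h01 rho_meas h_meas
                       (f x u) x u (ler0n R n)).
rewrite Ea Es -EFinM -EFinD lee_fin -natr1.
by have := f01 Uu; lra.
Qed.

Lemma canonical_avg_le_rho x : avg x (phi x) <= (rho x)%:E.
Proof.
have [a Ea _] := sup_step_bounded Qo Rad_ge0 0 x (phi x) rho01 rho_meas.
rewrite Ea lee_fin -subr_le0.
apply: (@le0_of_natmul_bounded _ _ (rho x + h x)) => n.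
have := sup_step_affine_ge_scale Qo Rad_ge0 rho01 h01 rho_meas h_meas
          x (phi x) (ler0n R n) (proj1 (andP (f01 (phi_in x)))).
rewrite -Jpol_succ_affine // Jpol_affine Ea -EFinM lee_fin -natr1.
by lra.
Qed.

Lemma canonical_optimality_equations : optimality_equations.
Proof.
move=> x; have c1 : (rho x)%:E = avg x (phi x).
  by apply/eqP; rewrite eq_le canonical_avg_le_rho canonical_rho_le_avg.
split => //.
- apply/esym/(ereal_inf_attained (phi_in x) (esym c1)) => u Uu.
  exact: canonical_rho_le_avg.
- by have := Jstar_affine 1 x; rewrite /= mul1r => <-.
- by have := Jpol_affine 1 x; rewrite /= mul1r => <-.
Qed.

End canonical_triplet_optimality.

Section optimality_equations_canonical.
Variables xm xM : X.
Hypotheses (rho_xm : forall z, (rho xm <= rho z)%R) (rho_xM : forall z, (rho z <= rho xM)%R).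
Hypothesis Rad_le2 : (Rad <= 2)%R.
Hypothesis opt : optimality_equations.

Lemma rho_const_of_pos_radius : (0 < Rad)%R -> forall z, rho z = rho xm.
Proof.
move=> Rpos.
have b0 : (0 <= Rad / 2)%R by rewrite divr_ge0 // ltW.
pose b : {nonneg R} := NngNum b0.
have b1 : (b%:num <= 1)%R by rewrite /= ler_pdivrMr // mul1r.
pose Q := dirac_mix (Qo xm (phi xm)) xM b1.
have QB : tv_ball Rad Qo xm (phi xm) Q.
  apply: le_trans (tv_dist_dirac_mix _ _ b1) _; rewrite lee_fin /=; lra.
have := sup_step_ubound 0 (fun z => (rho z)%:E) QB.
have [_ _ <- _] := opt xm.
rewrite add0e integral_dirac_mix //; last exact/measurable_EFinP.
have [i Ei _] := integral_prob_bounded (Qo xm (phi xm)) rho01 rho_meas.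
have := integral_prob_ge (Qo xm (phi xm)) (rho0 xm) rho_xm rho_meas.
rewrite Ei -!EFinM -EFinD !lee_fin /= => i_ge mix_le.
have : (Rad / 2 * (rho xM - rho xm) <= 0)%R.
  have : (0 <= (1 - Rad / 2) * (i - rho xm))%R.
    by apply: mulr_ge0; rewrite subr_ge0 // ler_pdivrMr // mul1r.
  by lra.
rewrite pmulr_rle0 ?divr_gt0 // subr_le0 => xM_le z.
by apply/eqP; rewrite eq_le rho_xm (le_trans (rho_xM z) xM_le).
Qed.

Lemma rho_le_integral_ball x u : Ux x u -> forall Q, tv_ball Rad Qo x u Q ->
  (rho x)%:E <= \int[Q]_(z in [set: borel X]) (rho z)%:E.
Proof.
move=> Uu Q QB; have [R0|Rne0] := eqVneq Rad 0%R.
  rewrite (integral_tv_ball0 _ R0 QB).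
  have [-> _ _ _] := opt x.
  apply: le_trans (ereal_inf_lbound _) _; first by exists u.
  by apply: ge_sup_step => Q' Q'B; rewrite add0e (integral_tv_ball0 _ R0 Q'B).
have Rpos : (0 < Rad)%R by rewrite lt_neqAle eq_sym Rne0 Rad_ge0.
under eq_integral do rewrite (rho_const_of_pos_radius Rpos).
by rewrite integral_prob_cst (rho_const_of_pos_radius Rpos).
Qed.

Lemma optimality_value_iteration n x :
  Jpol Rad f Qo phi h n x = Jstar Rad Ux f Qo h n x /\
  Jstar Rad Ux f Qo h n x = V n x.
Proof.
elim: n x => [|n IH] x; first by rewrite /= mul0r add0r.
have [_ b_inf c1 c2] := opt x.
have Vn1E : V n.+1 x = (n%:R * rho x)%:E + (rho x + h x)%:E.
  by rewrite -EFinD -natr1 mulrDl mul1r addrA.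
have T_ge u : Ux x u -> V n.+1 x <= T n x u.
  move=> Uu; rewrite Vn1E.
  apply: le_trans _ (sup_step_affine_ge_shift rho01 h01 rho_meas h_meas (f x u)
                     (ler0n R n) (rho_le_integral_ball Uu)).
  by apply: leeD2l; rewrite b_inf; apply: ereal_inf_lbound; exists u.
have T_phi : T n x (phi x) = V n.+1 x.
  apply/eqP; rewrite eq_le T_ge // andbT Vn1E c2 EFinM c1.
  exact: sup_step_affine_le.
rewrite Jpol_succ_affine; last by move=> z; case: (IH z) => -> ->.
rewrite Jstar_succ_affine; last by move=> z; case: (IH z).
by rewrite (ereal_inf_attained (F := fun u => T n x u) (phi_in x) T_phi T_ge).
Qed.

End optimality_equations_canonical.
End minimax_model.

Theorem mainTheorem4 (R : realType)
  (X U : completePseudoMetricType R)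
  (polX : polish X) (polU : polish U)
  (Ux : X -> set U)
  (Ux_ne : forall x, Ux x !=set0)
  (Ux_compact : forall x, compact (Ux x))
  (Ux_meas : forall x, measurable (Ux x : set (borel U)))
  (f : X -> U -> R)
  (f_ge0 : forall x u, Ux x u -> 0 <= f x u)
  (f_bnd : exists M : R, forall x u, Ux x u -> f x u <= M)
  (f_cont : {within [set p : X * U | Ux p.1 p.2],
              continuous (fun p : X * U => f p.1 p.2)})
  (Qo : X -> U -> probability (borel X) R)
  (Qo_cont : forall A : set (borel X), measurable A ->
     {within [set p : X * U | Ux p.1 p.2],
        continuous (fun p : X * U => fine (Qo p.1 p.2 A))})
  (Rad : R) (Rad_ge0 : 0 <= Rad) (Rad_le2 : Rad <= 2)
  (rho h : X -> R)
  (rho_bnd : bounded_fun_X rho) (h_bnd : bounded_fun_X h)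
  (rho_cont : continuous rho) (h_cont : continuous h)
  (rho_ge0 : forall x, 0 <= rho x) (h_ge0 : forall x, 0 <= h x)
  (rho_meas : measurable_fun [set: borel X] (rho : borel X -> R))
  (h_meas : measurable_fun [set: borel X] (h : borel X -> R))
  (rho_max : exists x0, forall x, rho x <= rho x0)
  (rho_min : exists x0, forall x, rho x0 <= rho x)
  (h_max : exists x0, forall x, h x <= h x0)
  (h_min : exists x0, forall x, h x0 <= h x)
  (phi : X -> U) (phi_sel : selector Ux phi) :
  canonical_triplet Rad Ux f Qo rho h phi <->
  (forall x : X,
     [/\ (rho x)%:E =
           ereal_inf [set sup_step Rad Qo 0 (fun z => (rho z)%:E) x u | u in Ux x],
         (rho x + h x)%:E =
           ereal_inf [set sup_step Rad Qo (f x u) (fun z => (h z)%:E) x u | u in Ux x],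
         (rho x)%:E = sup_step Rad Qo 0 (fun z => (rho z)%:E) x (phi x) &
         (rho x + h x)%:E = sup_step Rad Qo (f x (phi x)) (fun z => (h z)%:E) x (phi x)]).
Proof.
have [xM rho_xM] := rho_max; have [xm rho_xm] := rho_min.
have [xH h_xH] := h_max; have [Mf f_le] := f_bnd.
have rho01 z : 0 <= rho z <= rho xM by rewrite rho_ge0 rho_xM.
have h01 z : 0 <= h z <= h xH by rewrite h_ge0 h_xH.
have f01 x u : Ux x u -> 0 <= f x u <= Mf by move=> Uu; rewrite f_ge0 ?f_le.
have phi_in := phi_sel.2.
split => [[_ _ _ _ J] | opt].
- apply: (canonical_optimality_equations Rad_ge0 phi_in f01 rho01 h01 rho_meas h_meas) => n z.
  + by case: (J n z).
  + by case: (J n z) => -> ->.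
- split => //.
  exact: (optimality_value_iteration Rad_ge0 phi_in rho01 h01 rho_meas h_meas rho_xm rho_xM Rad_le2 opt).
Qed.
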